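(* Under the triangle scaling property, for every $T\ge1$ the generic accelerated Bregman proximal point method satisfies $$d(\lambda^* )-d(\lambda_T)\le\Big[\prod_{k=0}^{T-1}(1-\theta_k)\Big]\big(d(\lambda^* )-d(\lambda_0)+AD_h(\lambda^*,\lambda_0)\big),$$ and $$\frac{1}{\big(1+\sqrt{A/G}\sum_{k=0}^{T-1}\sqrt{\eta_k}\big)^2}\le\prod_{k=0}^{T-1}(1-\theta_k)\le\frac{1}{\big(1+\tfrac12\sqrt{A/G}\sum_{k=0}^{T-1}\sqrt{\eta_k}\big)^2}.$$
   Context: $\Lambda\subseteq\mathbb{R}^m$ closed convex, $d:\Lambda\to\mathbb{R}$ concave with a maximizer $\lambda^*\in\Lambda$. $h$ strictly convex, continuously differentiable on $\Lambda$, $D_h(\lambda,\tilde\lambda)=h(\lambda)-h(\tilde\lambda)-\nabla h(\tilde\lambda)^\top(\lambda-\tilde\lambda)$. Triangle scaling property with constant $G>0$: $D_h((1-\theta)\lambda+\theta\lambda_1,(1-\theta)\lambda+\theta\lambda_2)\le G\theta^2D_h(\lambda_1,\lambda_2)$ for all $\lambda,\lambda_1,\lambda_2\in\Lambda$, $\theta\in[0,1]$. Generic accelerated BPP (acc-BPP): given $\lambda_0\in\Lambda$, $v_0=\lambda_0$, $A_0=A>0$, $\eta_k>0$, set $\phi_0(\lambda)=d(\lambda_0)-AD_h(\lambda,\lambda_0)$, and for $k\ge0$: $\theta_k\in(0,1)$ is the positive root of $\theta^2=\eta_kA_k(1-\theta)/G$, i.e. $\theta_k=\frac{\sqrt{(A_k\eta_k/G)^2+4A_k\eta_k/G}-A_k\eta_k/G}{2}$;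 $y_k=\theta_kv_k+(1-\theta_k)\lambda_k$; $\lambda_{k+1}\in\arg\max_{\lambda\in\Lambda}\{d(\lambda)-\frac1{\eta_k}D_h(\lambda,y_k)\}$; $A_{k+1}=(1-\theta_k)A_k$; $\phi_{k+1}(\lambda)=(1-\theta_k)\phi_k(\lambda)+\theta_k\big(d(\lambda_{k+1})+\frac1{\eta_k}(\nabla h(\lambda_{k+1})-\nabla h(y_k))^\top(\lambda-\lambda_{k+1})\big)$; $v_{k+1}\in\arg\max_{\lambda\in\Lambda}\phi_{k+1}(\lambda)$. All maximizers are assumed to exist. *)

From Stdlib Require Import Reals Lra.
From Stdlib Require Vectors.Fin.
Open Scope R_scope.

Definition vec (m : nat) := Fin.t m -> R.

Fixpoint sumF (m : nat) : (Fin.t m -> R) -> R :=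
  match m return (Fin.t m -> R) -> R with
  | O => fun _ => 0
  | S n => fun f => f Fin.F1 + sumF n (fun i => f (Fin.FS i))
  end.

Definition dot {m} (x y : vec m) : R := sumF m (fun i => x i * y i).
Definition vadd {m} (x y : vec m) : vec m := fun i => x i + y i.
Definition vsub {m} (x y : vec m) : vec m := fun i => x i - y i.
Definition vscal {m} (a : R) (x : vec m) : vec m := fun i => a * x i.
Definition vnorm {m} (x : vec m) : R := sqrt (dot x x).

Definition vcomb {m} (t : R) (x y : vec m) : vec m :=
  fun i => (1 - t) * x i + t * y i.

Definition vconvex_set {m} (L : vec m -> Prop) : Prop :=
  forall x y t, L x -> L y -> 0 <= t <= 1 -> L (vcomb t x y).

Definition vclosed_set {m} (L : vec m -> Prop) : Prop :=
  forall x, (forall eps, 0 < eps -> exists y, L y /\ vnorm (vsub y x) < eps) -> L x.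

Definition concave_on {m} (L : vec m -> Prop) (f : vec m -> R) : Prop :=
  forall x y t, L x -> L y -> 0 <= t <= 1 ->
    (1 - t) * f x + t * f y <= f (vcomb t x y).

Definition strictly_convex_on {m} (L : vec m -> Prop) (f : vec m -> R) : Prop :=
  forall x y t, L x -> L y -> x <> y -> 0 < t < 1 ->
    f (vcomb t x y) < (1 - t) * f x + t * f y.

Definition has_gradient_at {m} (f : vec m -> R) (x g : vec m) : Prop :=
  forall eps, 0 < eps -> exists delta, 0 < delta /\
    forall y, vnorm (vsub y x) < delta ->
      Rabs (f y - f x - dot g (vsub y x)) <= eps * vnorm (vsub y x).

Definition continuous_on_vec {m} (L : vec m -> Prop) (F : vec m -> vec m) : Prop :=
  forall x, L x -> forall eps, 0 < eps -> exists delta, 0 < delta /\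
    forall y, L y -> vnorm (vsub y x) < delta -> vnorm (vsub (F y) (F x)) < eps.

Definition C1_on {m} (L : vec m -> Prop) (h : vec m -> R) (gh : vec m -> vec m) : Prop :=
  (forall x, L x -> has_gradient_at h x (gh x)) /\ continuous_on_vec L gh.

Definition Dh {m} (h : vec m -> R) (gh : vec m -> vec m) (l lt : vec m) : R :=
  h l - h lt - dot (gh lt) (vsub l lt).

Definition is_argmax {m} (L : vec m -> Prop) (f : vec m -> R) (x : vec m) : Prop :=
  L x /\ forall y, L y -> f y <= f x.

Definition triangle_scaling {m} (L : vec m -> Prop) (h : vec m -> R)
  (gh : vec m -> vec m) (G : R) : Prop :=
  forall l l1 l2 t, L l -> L l1 -> L l2 -> 0 <= t <= 1 ->
    Dh h gh (vcomb t l l1) (vcomb t l l2) <= G * t ^ 2 * Dh h gh l1 l2.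

Fixpoint prod_upto (a : nat -> R) (T : nat) : R :=
  match T with O => 1 | S n => prod_upto a n * a n end.
Fixpoint sum_upto (a : nat -> R) (T : nat) : R :=
  match T with O => 0 | S n => sum_upto a n + a n end.

(* Estimate sequence.  Each [phi k] is an affine function minus [Aseq k * h],
   and with P k = prod_{j<k} (1 - theta j) (so that Aseq k = A P k),
     (1 - P k) d + P k phi_0  <=  phi k  <=  d (lam k) - Aseq k D_h(., v k).
   The lower bound holds because each proximal step yields a linear majorant
   of [d]; the upper bound propagates through the Bregman three-point
   identity and the triangle scaling property, the choice
   theta_k^2 = Aseq k eta_k (1 - theta_k) / G making the scaling loss cancel.
   Evaluating both at [lstar] gives the gap estimate.  For the rate, the same
   choice gives 1 / sqrt (P (k+1)) = 1 / sqrt (P k) + sqrt (A eta_k / G) / (1 + sqrt (1 - theta_k)),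
   and the denominator lies in (1, 2]. *)

From Stdlib Require Import Reals Lra Classical FunctionalExtensionality.
Open Scope R_scope.

Lemma sumF_ext m (f g : Fin.t m -> R) :
  (forall i, f i = g i) -> sumF m f = sumF m g.
Proof.
  induction m as [|m IH]; intros H; simpl; [reflexivity|].
  rewrite H; f_equal; apply IH; intros; apply H.
Qed.

Lemma sumF_add m (f g : Fin.t m -> R) :
  sumF m (fun i => f i + g i) = sumF m f + sumF m g.
Proof.
  induction m as [|m IH]; simpl; [ring|].
  rewrite (IH (fun i => f (Fin.FS i)) (fun i => g (Fin.FS i))); ring.
Qed.

Lemma sumF_scal m c (f : Fin.t m -> R) :
  sumF m (fun i => c * f i) = c * sumF m f.
Proof.
  induction m as [|m IH]; simpl; [ring|].
  rewrite (IH (fun i => f (Fin.FS i))); ring.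
Qed.

Lemma sumF_ge0 m (f : Fin.t m -> R) : (forall i, 0 <= f i) -> 0 <= sumF m f.
Proof.
  induction m as [|m IH]; intros H; simpl; [lra|].
  pose proof (H Fin.F1); pose proof (IH (fun i => f (Fin.FS i)) (fun i => H _)); lra.
Qed.

Lemma dot_lin_l {m} (a b x : vec m) p q :
  dot (fun i => p * a i + q * b i) x = p * dot a x + q * dot b x.
Proof.
  unfold dot; rewrite <- !sumF_scal, <- sumF_add; apply sumF_ext; intros; ring.
Qed.

Lemma dot_sub_l {m} (a b x : vec m) : dot (vsub a b) x = dot a x - dot b x.
Proof.
  replace (dot a x - dot b x) with (1 * dot a x + (-1) * dot b x) by ring.
  rewrite <- dot_lin_l; apply sumF_ext; intros; unfold vsub; ring.
Qed.

Lemma dot_sub_r {m} (a x y : vec m) : dot a (vsub x y) = dot a x - dot a y.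
Proof.
  unfold dot, vsub; replace (sumF m (fun i => a i * x i) - sumF m (fun i => a i * y i))
    with (sumF m (fun i => a i * x i) + -1 * sumF m (fun i => a i * y i)) by ring.
  rewrite <- sumF_scal, <- sumF_add; apply sumF_ext; intros; ring.
Qed.

Lemma dot_vcomb_r {m} (a x y : vec m) t :
  dot a (vcomb t x y) = (1 - t) * dot a x + t * dot a y.
Proof.
  unfold dot, vcomb; rewrite <- !sumF_scal, <- sumF_add; apply sumF_ext; intros; ring.
Qed.

Lemma vnorm_vcomb_sub {m} (x l : vec m) t :
  0 <= t -> vnorm (vsub (vcomb t x l) x) = t * vnorm (vsub l x).
Proof.
  intros Ht; unfold vnorm.
  replace (dot (vsub (vcomb t x l) x) (vsub (vcomb t x l) x))
    with ((t * t) * dot (vsub l x) (vsub l x)).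
  - rewrite sqrt_mult, sqrt_square; [reflexivity | lra | nra |].
    unfold dot; apply sumF_ge0; intros; nra.
  - unfold dot; rewrite <- sumF_scal; apply sumF_ext; intros; unfold vsub, vcomb; ring.
Qed.

(* The first-order remainder of [f] along the segment from [x] to [l] is o(t),
   so it cannot dominate a linear term [t * c] with [c > 0]. *)
Lemma nonpos_of_le_gradient_remainder {m} (f : vec m -> R) (g x l : vec m) c K :
  has_gradient_at f x g ->
  (forall t, 0 < t < 1 ->
     t * c <= K * (f (vcomb t x l) - f x - dot g (vsub (vcomb t x l) x))) ->
  c <= 0.
Proof.
  intros Hg H; apply Rnot_lt_le; intros Hc.
  set (N := vnorm (vsub l x)).
  assert (HN : 0 <= N) by apply sqrt_pos.
  assert (HK : 0 <= Rabs K) by apply Rabs_pos.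
  set (eps := c / (2 * (Rabs K + 1) * (N + 1))).
  assert (Heps : 0 < eps) by (apply Rdiv_lt_0_compat; nra).
  destruct (Hg eps Heps) as [del [Hdel Hd]].
  set (r := Rmin 1 (del / (N + 1))).
  assert (Hr1 : r <= 1) by apply Rmin_l.
  assert (Hr0 : 0 < r) by (apply Rmin_pos; [lra | apply Rdiv_lt_0_compat; lra]).
  assert (Hrdel : r * (N + 1) <= del).
  { replace del with (del / (N + 1) * (N + 1)) by (field; lra).
    apply Rmult_le_compat_r; [lra | apply Rmin_r]. }
  set (t := / 2 * r).
  assert (Ht : 0 < t < 1) by (unfold t; lra).
  assert (Hnear : vnorm (vsub (vcomb t x l) x) < del).
  { rewrite vnorm_vcomb_sub by lra; fold N; unfold t; nra. }
  specialize (Hd _ Hnear); rewrite vnorm_vcomb_sub in Hd by lra; fold N in Hd.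
  specialize (H t Ht).
  set (E := f (vcomb t x l) - f x - dot g (vsub (vcomb t x l) x)) in *.
  assert (K * E <= Rabs K * Rabs E) by (rewrite <- Rabs_mult; apply Rle_abs).
  assert (Rabs K * Rabs E <= Rabs K * (eps * (t * N))) by (apply Rmult_le_compat_l; auto).
  assert (Hc_eq : eps * (2 * (Rabs K + 1) * (N + 1)) = c) by (unfold eps; field; nra).
  assert (0 < t * eps) by nra.
  nra.
Qed.

Lemma Dh_self {m} h (gh : vec m -> vec m) x : Dh h gh x x = 0.
Proof. unfold Dh; rewrite dot_sub_r; ring. Qed.

Lemma Dh_three_point {m} h (gh : vec m -> vec m) z a b :
  dot (vsub (gh a) (gh b)) (vsub z a) = Dh h gh z b - Dh h gh z a - Dh h gh a b.
Proof. unfold Dh; rewrite dot_sub_l, !dot_sub_r; ring. Qed.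

Section FirstOrder.

Variables (m : nat) (L : vec m -> Prop) (h : vec m -> R) (gh : vec m -> vec m).
Hypotheses (L_convex : vconvex_set L) (h_C1 : C1_on L h gh).

Lemma Dh_ge0 x l :
  strictly_convex_on L h -> L x -> L l -> 0 <= Dh h gh l x.
Proof.
  intros h_cvx Hx Hl.
  destruct (classic (l = x)) as [->|Hne]; [rewrite Dh_self; lra|].
  enough (- Dh h gh l x <= 0) by lra.
  apply (nonpos_of_le_gradient_remainder h (gh x) x l _ (-1) (proj1 h_C1 x Hx)).
  intros t Ht; pose proof (h_cvx x l t Hx Hl (not_eq_sym Hne) Ht).
  unfold Dh; rewrite !dot_sub_r, dot_vcomb_r; nra.
Qed.

Lemma le_argmax_affine_sub_Dh F c g a v :
  is_argmax L F v -> (forall l, F l = c + dot g l - a * h l) ->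
  forall l, L l -> F l <= F v - a * Dh h gh l v.
Proof.
  intros [Hv Hmax] HF l Hl.
  assert (dot g l - dot g v - a * (dot (gh v) l - dot (gh v) v) <= 0).
  { apply (nonpos_of_le_gradient_remainder h (gh v) v l _ a (proj1 h_C1 v Hv)).
    intros t Ht.
    pose proof (Hmax _ (L_convex v l t Hv Hl (conj (Rlt_le _ _ (proj1 Ht)) (Rlt_le _ _ (proj2 Ht))))) as Hz.
    rewrite !HF, dot_vcomb_r in Hz; rewrite dot_sub_r, dot_vcomb_r; nra. }
  rewrite !HF; unfold Dh; rewrite dot_sub_r; nra.
Qed.

Lemma prox_linearization_ge d e y lp :
  concave_on L d -> is_argmax L (fun l => d l - e * Dh h gh l y) lp ->
  forall l, L l -> d l <= d lp + e * dot (vsub (gh lp) (gh y)) (vsub l lp).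
Proof.
  intros d_ccv [Hp Hmax] l Hl.
  assert (d l - d lp - e * (dot (gh lp) l - dot (gh lp) lp - dot (gh y) l + dot (gh y) lp) <= 0).
  { apply (nonpos_of_le_gradient_remainder h (gh lp) lp l _ e (proj1 h_C1 lp Hp)).
    intros t Ht; assert (Ht' : 0 <= t <= 1) by lra.
    pose proof (Hmax _ (L_convex lp l t Hp Hl Ht')) as Hz.
    pose proof (d_ccv lp l t Hp Hl Ht').
    unfold Dh in Hz; rewrite !dot_sub_r, dot_vcomb_r in Hz; rewrite dot_sub_r, dot_vcomb_r; nra. }
  rewrite dot_sub_l, !dot_sub_r; nra.
Qed.

End FirstOrder.

Lemma positive_root_spec a : 0 < a ->
  let t := (sqrt (a ^ 2 + 4 * a) - a) / 2 in 0 < t < 1 /\ t ^ 2 = a * (1 - t).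
Proof.
  intros Ha t; assert (Hp : 0 <= a ^ 2 + 4 * a) by nra.
  pose proof (sqrt_sqrt _ Hp); pose proof (sqrt_pos (a ^ 2 + 4 * a)).
  unfold t; set (s := sqrt (a ^ 2 + 4 * a)) in *; split; [split|]; nra.
Qed.

Lemma inv_mul_sqrt_step u s c :
  0 < u -> 0 < s -> s * s = 1 - u * c * s -> / (u * s) = / u + c / (1 + s).
Proof. intros Hu Hs Hss; field_simplify_eq; nra. Qed.

Lemma inv_sqr_le_of_inv_sqrt_le p x : 0 < p -> 0 < x -> / sqrt p <= x -> 1 / x ^ 2 <= p.
Proof.
  intros Hp Hx Hle.
  assert (Hu : 0 < sqrt p) by (apply sqrt_lt_R0; lra).
  assert (Hux : 1 <= sqrt p * x).
  { rewrite <- (Rinv_r (sqrt p)) by lra; apply Rmult_le_compat_l; lra. }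
  rewrite <- (sqrt_sqrt p) by lra.
  apply (Rmult_le_reg_r (x ^ 2)); [nra|]; unfold Rdiv; rewrite Rmult_1_l, Rinv_l by nra; nra.
Qed.

Lemma le_inv_sqr_of_le_inv_sqrt p x : 0 < p -> 0 < x -> x <= / sqrt p -> p <= 1 / x ^ 2.
Proof.
  intros Hp Hx Hle.
  assert (Hu : 0 < sqrt p) by (apply sqrt_lt_R0; lra).
  assert (Hux : sqrt p * x <= 1).
  { rewrite <- (Rinv_r (sqrt p)) by lra; apply Rmult_le_compat_l; lra. }
  rewrite <- (sqrt_sqrt p) by lra.
  apply (Rmult_le_reg_r (x ^ 2)); [nra|]; unfold Rdiv; rewrite Rmult_1_l, Rinv_l by nra.
  assert (0 <= sqrt p * x) by nra; nra.
Qed.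

Lemma sum_upto_ge0 (a : nat -> R) T : (forall k, 0 <= a k) -> 0 <= sum_upto a T.
Proof. intros Ha; induction T as [|T IH]; simpl; [lra | pose proof (Ha T); lra]. Qed.

Section AcceleratedBPP.

Variables (m : nat) (L : vec m -> Prop) (d h : vec m -> R) (gh : vec m -> vec m)
  (G A : R) (eta theta Aseq : nat -> R) (lam v y : nat -> vec m)
  (phi : nat -> vec m -> R).

Hypotheses (L_convex : vconvex_set L) (d_concave : concave_on L d)
  (h_strict : strictly_convex_on L h) (h_C1 : C1_on L h gh)
  (G_pos : 0 < G) (h_scaling : triangle_scaling L h gh G)
  (A_pos : 0 < A) (eta_pos : forall k, 0 < eta k)
  (lam0_in : L (lam 0%nat)) (v0 : v 0%nat = lam 0%nat) (Aseq0 : Aseq 0%nat = A)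
  (phi0 : forall l, phi 0%nat l = d (lam 0%nat) - A * Dh h gh l (lam 0%nat))
  (theta_def : forall k, theta k =
      (sqrt ((Aseq k * eta k / G) ^ 2 + 4 * Aseq k * eta k / G) - Aseq k * eta k / G) / 2)
  (y_def : forall k, y k = (fun i => theta k * v k i + (1 - theta k) * lam k i))
  (lam_step : forall k, is_argmax L (fun l => d l - / eta k * Dh h gh l (y k)) (lam (S k)))
  (Aseq_step : forall k, Aseq (S k) = (1 - theta k) * Aseq k)
  (phi_step : forall k l, phi (S k) l = (1 - theta k) * phi k l +
      theta k * (d (lam (S k)) +
        / eta k * dot (vsub (gh (lam (S k))) (gh (y k))) (vsub l (lam (S k)))))
  (v_step : forall k, is_argmax L (phi (S k)) (v (S k))).

Local Notation P := (prod_upto (fun k => 1 - theta k)).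

Lemma lam_in k : L (lam k).
Proof. destruct k; [exact lam0_in | exact (proj1 (lam_step k))]. Qed.

Lemma v_in k : L (v k).
Proof. destruct k; [rewrite v0; exact lam0_in | exact (proj1 (v_step k))]. Qed.

Lemma y_vcomb k : y k = vcomb (theta k) (lam k) (v k).
Proof. rewrite y_def; apply functional_extensionality; intros i; unfold vcomb; ring. Qed.

Lemma theta_spec_of_Aseq_pos k : 0 < Aseq k ->
  0 < theta k < 1 /\ theta k ^ 2 = Aseq k * eta k / G * (1 - theta k).
Proof.
  intros HAk; rewrite theta_def.
  replace (4 * Aseq k * eta k / G) with (4 * (Aseq k * eta k / G)) by (field; lra).
  apply positive_root_spec, Rdiv_lt_0_compat; [|lra].
  pose proof (eta_pos k); nra.
Qed.

Lemma Aseq_pos k : 0 < Aseq k.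
Proof.
  induction k as [|k IH]; [lra|].
  rewrite Aseq_step; destruct (theta_spec_of_Aseq_pos k IH); nra.
Qed.

Lemma theta_range k : 0 < theta k < 1.
Proof. apply theta_spec_of_Aseq_pos, Aseq_pos. Qed.

Lemma theta_sq k : theta k ^ 2 = Aseq k * eta k / G * (1 - theta k).
Proof. apply theta_spec_of_Aseq_pos, Aseq_pos. Qed.

Lemma Aseq_prod k : Aseq k = A * P k.
Proof.
  induction k as [|k IH]; simpl; [lra|].
  rewrite Aseq_step, IH; ring.
Qed.

Lemma P_pos k : 0 < P k.
Proof.
  induction k as [|k IH]; simpl; [lra|].
  pose proof (theta_range k); nra.
Qed.

Lemma phi_affine k : exists c g, forall l, phi k l = c + dot g l - Aseq k * h l.
Proof.
  induction k as [|k [c [g Hg]]].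
  - exists (d (lam 0%nat) + A * h (lam 0%nat) - A * dot (gh (lam 0%nat)) (lam 0%nat)),
      (fun i => A * gh (lam 0%nat) i + 0 * gh (lam 0%nat) i).
    intros l; rewrite phi0, Aseq0, dot_lin_l; unfold Dh; rewrite dot_sub_r; ring.
  - set (w := vsub (gh (lam (S k))) (gh (y k))).
    exists ((1 - theta k) * c + theta k * d (lam (S k)) - theta k * / eta k * dot w (lam (S k))),
      (fun i => (1 - theta k) * g i + (theta k * / eta k) * w i).
    intros l; rewrite phi_step, Hg, Aseq_step, dot_lin_l; fold w; rewrite dot_sub_r; ring.
Qed.

Lemma d_le_prox_linearization k l : L l ->
  d l <= d (lam (S k)) + / eta k * dot (vsub (gh (lam (S k))) (gh (y k))) (vsub l (lam (S k))).
Proof. exact (prox_linearization_ge m L h gh L_convex h_C1 d _ _ _ d_concave (lam_step k) l). Qed.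

Lemma phi_lower k l : L l -> (1 - P k) * d l + P k * phi 0%nat l <= phi k l.
Proof.
  intros Hl; induction k as [|k IH]; simpl; [lra|].
  rewrite phi_step.
  pose proof (d_le_prox_linearization k l Hl); pose proof (theta_range k).
  set (ell := d (lam (S k)) + _) in *.
  assert ((1 - theta k) * ((1 - P k) * d l + P k * phi 0%nat l) <= (1 - theta k) * phi k l)
    by (apply Rmult_le_compat_l; lra).
  assert (theta k * d l <= theta k * ell) by (apply Rmult_le_compat_l; lra).
  nra.
Qed.

Lemma phi_succ_le_d k :
  (forall l, L l -> phi k l <= d (lam k) - Aseq k * Dh h gh l (v k)) ->
  forall l, L l -> phi (S k) l <= d (lam (S k)).
Proof.
  intros IH l Hl; rewrite phi_step.
  pose proof (theta_range k) as Hth; pose proof (Aseq_pos k).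
  set (lp := lam (S k)); set (w := vsub (gh lp) (gh (y k))).
  set (z := vcomb (theta k) (lam k) l).
  assert (Hlp : L lp) by exact (proj1 (lam_step k)).
  assert (Hz : L z) by (apply L_convex; [apply lam_in | exact Hl | lra]).
  assert (Hy : L (y k)) by (rewrite y_vcomb; apply L_convex; [apply lam_in | apply v_in | lra]).
  assert (Hw : (1 - theta k) * dot w (vsub (lam k) lp) + theta k * dot w (vsub l lp)
               = Dh h gh z (y k) - Dh h gh z lp - Dh h gh lp (y k)).
  { rewrite <- Dh_three_point; fold w; unfold z; rewrite !dot_sub_r, dot_vcomb_r; ring. }
  assert (Hzlp : 0 <= Dh h gh z lp) by exact (Dh_ge0 m L h gh h_C1 lp z h_strict Hlp Hz).
  assert (Hlpy : 0 <= Dh h gh lp (y k)) by exact (Dh_ge0 m L h gh h_C1 _ _ h_strict Hy Hlp).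
  assert (Hzy : Dh h gh z (y k) <= G * theta k ^ 2 * Dh h gh l (v k)).
  { rewrite y_vcomb; apply h_scaling; [apply lam_in | exact Hl | apply v_in | lra]. }
  assert (Hcancel : / eta k * (G * theta k ^ 2) = (1 - theta k) * Aseq k).
  { rewrite theta_sq; pose proof (eta_pos k); field; lra. }
  assert (Heta : 0 < / eta k) by apply Rinv_0_lt_compat, eta_pos.
  pose proof (IH l Hl); pose proof (d_le_prox_linearization k (lam k) (lam_in k)) as Hprox.
  fold lp w in Hprox.
  assert ((1 - theta k) * phi k l <= (1 - theta k) * (d (lam k) - Aseq k * Dh h gh l (v k)))
    by (apply Rmult_le_compat_l; lra).
  assert ((1 - theta k) * d (lam k) <= (1 - theta k) * (d lp + / eta k * dot w (vsub (lam k) lp)))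
    by (apply Rmult_le_compat_l; lra).
  assert (/ eta k * Dh h gh z (y k) <= (1 - theta k) * Aseq k * Dh h gh l (v k)).
  { rewrite <- Hcancel, Rmult_assoc; apply Rmult_le_compat_l; lra. }
  assert (0 <= / eta k * (Dh h gh z lp + Dh h gh lp (y k))) by (apply Rmult_le_pos; lra).
  nra.
Qed.

Lemma phi_upper k l : L l -> phi k l <= d (lam k) - Aseq k * Dh h gh l (v k).
Proof.
  revert l; induction k as [|k IH]; intros l Hl.
  - rewrite phi0, Aseq0, v0; lra.
  - destruct (phi_affine (S k)) as [c [g Hg]].
    pose proof (le_argmax_affine_sub_Dh m L h gh L_convex h_C1 _ c g _ _ (v_step k) Hg l Hl).
    pose proof (phi_succ_le_d k IH (v (S k)) (v_in (S k))); lra.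
Qed.

Lemma gap_le k lstar : is_argmax L d lstar ->
  d lstar - d (lam k) <= P k * (d lstar - d (lam 0%nat) + A * Dh h gh lstar (lam 0%nat)).
Proof.
  intros [Hs _].
  pose proof (phi_lower k lstar Hs) as Hlow; pose proof (phi_upper k lstar Hs).
  rewrite phi0 in Hlow.
  assert (0 <= Aseq k * Dh h gh lstar (v k))
    by (apply Rmult_le_pos; [apply Rlt_le, Aseq_pos | apply (Dh_ge0 m L); auto; apply v_in]).
  nra.
Qed.

Local Notation Ssum k := (sqrt (A / G) * sum_upto (fun j => sqrt (eta j)) k).

Lemma theta_eq_sqrt k :
  theta k = sqrt (P k) * (sqrt (A / G) * sqrt (eta k)) * sqrt (1 - theta k).
Proof.
  pose proof (theta_range k); pose proof (P_pos k); pose proof (eta_pos k).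
  assert (HAG : 0 < A / G) by (apply Rdiv_lt_0_compat; lra).
  apply Rsqr_inj; [lra | repeat apply Rmult_le_pos; apply sqrt_pos |].
  unfold Rsqr.
  replace (sqrt (P k) * (sqrt (A / G) * sqrt (eta k)) * sqrt (1 - theta k) *
          (sqrt (P k) * (sqrt (A / G) * sqrt (eta k)) * sqrt (1 - theta k)))
    with ((sqrt (P k) * sqrt (P k)) * (sqrt (A / G) * sqrt (A / G)) *
          (sqrt (eta k) * sqrt (eta k)) * (sqrt (1 - theta k) * sqrt (1 - theta k))) by ring.
  rewrite !sqrt_sqrt by lra.
  replace (theta k * theta k) with (theta k ^ 2) by ring.
  rewrite theta_sq, Aseq_prod; field; lra.
Qed.

Lemma inv_sqrt_P_bounds k : 1 + / 2 * Ssum k <= / sqrt (P k) <= 1 + Ssum k.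
Proof.
  induction k as [|k IH]; simpl; [rewrite sqrt_1, Rinv_1; lra|].
  pose proof (theta_range k); pose proof (P_pos k).
  set (u := sqrt (P k)) in *; set (s := sqrt (1 - theta k));
    set (c := sqrt (A / G) * sqrt (eta k)).
  assert (Hu : 0 < u) by (apply sqrt_lt_R0; lra).
  assert (Hs : 0 < s) by (apply sqrt_lt_R0; lra).
  assert (Hs2 : s * s = 1 - theta k) by (apply sqrt_sqrt; lra).
  assert (Hc : 0 <= c) by (apply Rmult_le_pos; apply sqrt_pos).
  assert (Hs1 : s < 1) by nra.
  rewrite sqrt_mult by lra; fold u s.
  rewrite (inv_mul_sqrt_step u s c Hu Hs) by (rewrite Hs2, (theta_eq_sqrt k); reflexivity).
  assert (Hq : c / (1 + s) * (1 + s) = c) by (field; lra).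
  assert (0 <= c / (1 + s)) by (unfold Rdiv; apply Rmult_le_pos; [lra | apply Rlt_le, Rinv_0_lt_compat; lra]).
  replace (sqrt (A / G) * (sum_upto (fun j => sqrt (eta j)) k + sqrt (eta k)))
    with (Ssum k + c) by (unfold c; ring).
  split; nra.
Qed.

End AcceleratedBPP.

Theorem mainTheorem6 (m : nat) (L : vec m -> Prop) (d h : vec m -> R)
  (gh : vec m -> vec m) (lstar : vec m) (G A : R)
  (eta theta Aseq : nat -> R) (lam v y : nat -> vec m) (phi : nat -> vec m -> R) :
  vclosed_set L -> vconvex_set L ->
  concave_on L d -> is_argmax L d lstar ->
  strictly_convex_on L h -> C1_on L h gh ->
  0 < G -> triangle_scaling L h gh G ->
  0 < A -> (forall k, 0 < eta k) ->
  L (lam 0%nat) -> v 0%nat = lam 0%nat -> Aseq 0%nat = A ->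
  (forall l, phi 0%nat l = d (lam 0%nat) - A * Dh h gh l (lam 0%nat)) ->
  (forall k, theta k =
      (sqrt ((Aseq k * eta k / G) ^ 2 + 4 * Aseq k * eta k / G) - Aseq k * eta k / G) / 2) ->
  (forall k, y k = (fun i => theta k * v k i + (1 - theta k) * lam k i)) ->
  (forall k, is_argmax L (fun l => d l - / eta k * Dh h gh l (y k)) (lam (S k))) ->
  (forall k, Aseq (S k) = (1 - theta k) * Aseq k) ->
  (forall k l, phi (S k) l = (1 - theta k) * phi k l +
      theta k * (d (lam (S k)) +
        / eta k * dot (vsub (gh (lam (S k))) (gh (y k))) (vsub l (lam (S k))))) ->
  (forall k, is_argmax L (phi (S k)) (v (S k))) ->
  forall T : nat, (1 <= T)%nat ->
    d lstar - d (lam T) <=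
      prod_upto (fun k => 1 - theta k) T *
        (d lstar - d (lam 0%nat) + A * Dh h gh lstar (lam 0%nat))
    /\ 1 / (1 + sqrt (A / G) * sum_upto (fun k => sqrt (eta k)) T) ^ 2
         <= prod_upto (fun k => 1 - theta k) T
    /\ prod_upto (fun k => 1 - theta k) T
         <= 1 / (1 + / 2 * sqrt (A / G) * sum_upto (fun k => sqrt (eta k)) T) ^ 2.
Proof.
  (* Closedness of [L] only serves the existence of the maximizers, which are
     given; the estimates hold for [T = 0] as well. *)
  intros _ Hcv Hcc Hstar Hsc HC1 HG Hts HA Heta Hl0 Hv0 HA0 Hphi0 Hth Hy Hlam HAS Hphi Hv T _.
  split; [eapply (gap_le m L d h gh G A eta theta Aseq lam v y phi); eassumption|].
  assert (HP : 0 < prod_upto (fun k => 1 - theta k) T) by (eapply (P_pos G A eta theta Aseq); eassumption).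
  assert (HS : 0 <= sqrt (A / G) * sum_upto (fun k => sqrt (eta k)) T)
    by (apply Rmult_le_pos; [| apply sum_upto_ge0; intros]; apply sqrt_pos).
  destruct (inv_sqrt_P_bounds G A eta theta Aseq HG HA Heta HA0 Hth HAS T) as [Hlo Hhi].
  split.
  - apply inv_sqr_le_of_inv_sqrt_le; [exact HP | lra | exact Hhi].
  - apply le_inv_sqr_of_le_inv_sqrt; [exact HP | lra | rewrite Rmult_assoc; exact Hlo].
Qed.
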